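(* Let $P$ be a field, $X=\{x_1,\ldots,x_n\}$ a finite set, and let $W(X)$ be either the free commutative (unital) algebra $P[x_1,\ldots,x_n]$ or the free associative (unital) algebra over $P$ on $X$. Then $W(X)$ is almost central: every bijection $\mu:W(X)\to W(X)$ satisfying $\mu s=s\mu$ for all $s\in\mathrm{End}(W(X))$ is linear, i.e. there exist $a,b\in P$ with $a\neq 0$ such that $\mu(u)=au+b$ for all $u\in W(X)$.
   Context: $\mathrm{End}(W(X))$ denotes the semigroup of all (unital) algebra endomorphisms of $W(X)$. A bijection $\mu$ of $W(X)$ is called central if it commutes with every endomorphism of $W(X)$; an algebra is called almost central if each of its central bijections is of the form $u\mapsto au+b$ with $a,b\in P$, $a\neq0$. *)

From HB Require Import structures.
From mathcomp Require Import all_boot all_order all_algebra.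
From mathcomp Require Import monalg mpoly.
Set Implicit Arguments. Unset Strict Implicit. Unset Printing Implicit Defensive.
Import GRing.Theory.
Local Open Scope ring_scope.

Definition alg_endo (P : fieldType) (A : lalgType P) (s : A -> A) : Prop :=
  linear s /\ monoid_morphism s.

Definition central_bij (P : fieldType) (A : lalgType P) (mu : A -> A) : Prop :=
  bijective mu /\ forall s : A -> A, alg_endo s -> forall u, mu (s u) = s (mu u).

Definition almost_central (P : fieldType) (A : lalgType P) : Prop :=
  forall mu : A -> A, central_bij mu ->
    exists a b : P, a != 0 /\ forall u : A, mu u = a *: u + b%:A.

Notation free_comm_alg P n := {mpoly P[n]} (only parsing).
(* The free associative unital algebra P<x_1..x_n>: monoid algebra of the
   free monoid on 'I_n *)
Notation free_assoc_alg P n := {malg P[{fmonom 'I_n}]} (only parsing).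

From HB Require Import structures.
From mathcomp Require Import all_boot all_order all_algebra.
From mathcomp Require Import monalg mpoly.
Set Implicit Arguments. Unset Strict Implicit. Unset Printing Implicit Defensive.
Import GRing.Theory.
Local Open Scope ring_scope.

(* Let x be a generator and phi the algebra map to P[t] with phi x = t.  The
   endomorphism w |-> (phi w)(x) fixes x, so a central mu satisfies
   mu x = q(x) with q = phi (mu x); as every u is the image of x under some
   endomorphism, mu u = q(u) for all u.  Surjectivity of mu then writes
   t = phi x as a composite q o r of polynomials, so q has degree one. *)

Section HornerAlg.
Variable R : comNzRingType.

Lemma lrmorph_horner_alg (A B : algType R) (f : {lrmorphism A -> B}) a q :
  f (horner_alg a q) = horner_alg (f a) q.
Proof.
elim/poly_ind: q => [|q c IH]; first by rewrite !rmorph0.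
by rewrite !rmorphD !rmorphM /= !horner_algX !horner_algC IH rmorph_alg.
Qed.

Definition lrmorphism_of (A B : algType R) (f : A -> B)
    (f_lin : linear f) (f_mul : monoid_morphism f) : {lrmorphism A -> B} :=
  HB.pack f (GRing.isLinear.Build _ _ _ _ f f_lin)
            (GRing.isMonoidMorphism.Build _ _ f f_mul).

Lemma horner_alg_morph (A B : algType R) (f : A -> B) :
  linear f -> monoid_morphism f -> forall a q, f (horner_alg a q) = horner_alg (f a) q.
Proof.
by move=> f_lin f_mul a q; have := lrmorph_horner_alg (lrmorphism_of f_lin f_mul) a q.
Qed.

Lemma horner_alg_comp (p q : {poly R}) : horner_alg p q = q \Po p.
Proof. by rewrite (poly_alg_initial (comp_poly p)) /= comp_polyX. Qed.

Lemma horner_alg_size2 (A : algType R) (a : A) (q : {poly R}) :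
  size q = 2 -> horner_alg a q = q`_1 *: a + (q`_0)%:A.
Proof.
move=> sq; rewrite -[q in LHS]coefK poly_def sq !big_ord_recl big_ord0 addr0.
by rewrite addrC !rmorphD /= expr1 expr0 !linearZ /= horner_algX rmorph1 mulr_algl mulr1.
Qed.

End HornerAlg.

Lemma comp_poly_eqX_size (R : idomainType) (p q : {poly R}) :
  p \Po q = 'X -> size p = 2.
Proof.
move=> pqX; have : ((size p).-1 * (size q).-1).+1 = 2%N.
  by rewrite -size_comp_poly pqX size_polyX.
move=> -[/eqP]; rewrite muln_eq1 => /andP[/eqP sp _].
by move: sp; case: (size p) => // m /= ->.
Qed.

Section FreeGenerator.
Variables (P : fieldType) (A : algType P) (x : A) (phi : A -> {poly P}).
Hypotheses (phi_lin : linear phi) (phi_mul : monoid_morphism phi).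
Hypothesis phi_x : phi x = 'X.
Hypothesis x_free : forall u : A, exists2 s, alg_endo s & s x = u.

Lemma alg_endo_horner_alg_phi : alg_endo (horner_alg x \o phi).
Proof.
split; first by move=> c u v; rewrite /= phi_lin rmorphD /= linearZ /= mulr_algl.
by case: phi_mul => phi1 phiM; split=> [|u v]; rewrite /= ?phi1 ?phiM ?rmorph1 ?rmorphM.
Qed.

Section CentralBijection.
Variable mu : A -> A.
Hypothesis mu_central : central_bij mu.

Lemma central_bij_horner_alg u : mu u = horner_alg u (phi (mu x)).
Proof.
have [_ mu_comm] := mu_central.
have mu_x : mu x = horner_alg x (phi (mu x)).
  have tau_x : (horner_alg x \o phi) x = x by rewrite /= phi_x horner_algX.
  by rewrite -{1}tau_x (mu_comm _ alg_endo_horner_alg_phi).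
have [s [s_lin s_mul] <-] := x_free u.
by rewrite (mu_comm _ (conj s_lin s_mul)) [in LHS]mu_x (horner_alg_morph s_lin s_mul).
Qed.

Lemma central_bij_size : size (phi (mu x)) = 2.
Proof.
have [[nu _ nu_mu] _] := mu_central.
apply: (@comp_poly_eqX_size _ _ (phi (nu x))).
rewrite -horner_alg_comp -(horner_alg_morph phi_lin phi_mul).
by rewrite -central_bij_horner_alg nu_mu phi_x.
Qed.

End CentralBijection.

Lemma almost_central_of_free_generator : almost_central A.
Proof.
move=> mu mu_central; set q := phi (mu x).
have size_q : size q = 2 := central_bij_size mu_central.
exists q`_1, q`_0; split.
  have : lead_coef q != 0 by rewrite lead_coef_eq0 -size_poly_eq0 size_q.
  by rewrite lead_coefE size_q.
by move=> u; rewrite (central_bij_horner_alg mu_central) horner_alg_size2.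
Qed.

End FreeGenerator.

Section MPolyEval.
Variables (R : comNzRingType) (n : nat) (B : comAlgType R) (v : 'I_n -> B).

Definition mpoly_eval := @mpoly.mmap n R B (in_alg B) v.

Lemma mpoly_eval_linear : linear mpoly_eval.
Proof. by move=> c p q; rewrite /mpoly_eval raddfD /= mpoly.mmapZ mulr_algl. Qed.

Lemma mpoly_eval_monoid_morphism : monoid_morphism mpoly_eval.
Proof. exact: rmorphism_monoidP. Qed.

Lemma mpoly_evalX i : mpoly_eval 'X_i = v i.
Proof. by rewrite /mpoly_eval mpoly.mmapX mpoly.mmap1U. Qed.

End MPolyEval.

Lemma mpoly_almost_central (P : fieldType) (k : nat) : almost_central {mpoly P[k.+1]}.
Proof.
apply: (@almost_central_of_free_generator P _ 'X_ord0 (mpoly_eval (fun=> 'X))).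
- exact: mpoly_eval_linear.
- exact: mpoly_eval_monoid_morphism.
- exact: mpoly_evalX.
move=> u; exists (mpoly_eval (fun=> u)); last exact: mpoly_evalX.
split; [exact: mpoly_eval_linear | exact: mpoly_eval_monoid_morphism].
Qed.

Section MalgAlgebra.
Variables (R : comNzRingType) (K : monomType).

Lemma mul_malgCr (c : R) (g : {malg R[K]}) : g * malgC c = c *: g.
Proof.
by rewrite malgM_def malgZ_def fgmulgU; apply/eq_bigr=> k _; rewrite mulm1 mulrC.
Qed.

Lemma malg_scalerAr (c : R) (g h : {malg R[K]}) : c *: (g * h) = g * (c *: h).
Proof. by rewrite -!mul_malgCr mulrA. Qed.

(* Canonical instances are keyed on the head [malg], which already carries an
   algebra instance for commutative monoids only; the alias carries one for
   arbitrary monoids. *)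
Definition malg_alg := {malg R[K]}.
HB.instance Definition _ := GRing.Lalgebra.on malg_alg.
HB.instance Definition _ := GRing.Lalgebra_isAlgebra.Build R malg_alg malg_scalerAr.

End MalgAlgebra.

Section FreeAlgebraEval.
Variables (R : comNzRingType) (I : choiceType).

Definition fmonom_eval (S : nzRingType) (v : I -> S) (m : {fmonom I}) : S :=
  \prod_(i <- m) v i.

Lemma fmonom_eval_mmorphism (S : nzRingType) (v : I -> S) : mmorphism (fmonom_eval v).
Proof. by split=> [m1 m2|]; rewrite /fmonom_eval ?fmM ?big_cat // fm1 big_nil. Qed.

HB.instance Definition _ (S : nzRingType) (v : I -> S) :=
  isMultiplicative.Build {fmonom I} S (fmonom_eval v) (fmonom_eval_mmorphism v).

Variables (B : algType R) (v : I -> B).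

Definition malg_eval := monalg.mmap (in_alg B) (fmonom_eval v).

Lemma malg_eval_linear : linear malg_eval.
Proof. by move=> c p q; rewrite /malg_eval raddfD /= monalg.mmapZ mulr_algl. Qed.

Lemma malg_eval_monoid_morphism : monoid_morphism malg_eval.
Proof.
have [] := @monalg.commr_mmap_is_multiplicative _ R B (in_alg B) (fmonom_eval v).
  by move=> g m m'; apply: comm_alg.
by split.
Qed.

Lemma malg_evalU i : malg_eval << fmu i >> = v i.
Proof. by rewrite /malg_eval monalg.mmapU /fmonom_eval fmuE big_seq1 /= scale1r mul1r. Qed.

End FreeAlgebraEval.

Lemma free_algebra_almost_central (P : fieldType) (k : nat) :
  almost_central {malg P[{fmonom 'I_k.+1}]}.
Proof.
apply: (@almost_central_of_free_generator P (malg_alg P {fmonom 'I_k.+1}) << fmu ord0 >>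
         (malg_eval (fun=> 'X))).
- exact: malg_eval_linear.
- exact: malg_eval_monoid_morphism.
- exact: malg_evalU.
move=> u; exists (malg_eval (fun=> u)); last exact: malg_evalU.
split; [exact: malg_eval_linear | exact: malg_eval_monoid_morphism].
Qed.

Theorem theorem2 (P : fieldType) (n : nat) (hn : (0 < n)%N) :
  almost_central {mpoly P[n]} /\ almost_central {malg P[{fmonom 'I_n}]}.
Proof.
case: n hn => // k _.
split; [exact: mpoly_almost_central | exact: free_algebra_almost_central].
Qed.
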